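(* Let $\bm{X}\in\mathbb{R}^{n_1\times r}$, $\bm{Y}\in\mathbb{R}^{n_2\times r}$, and let $\bm{X}_\star,\bm{Y}_\star$, $\bm{M}_\star=\bm{X}_\star\bm{Y}_\star^\top$ be as in the context. Suppose that $\bm{I}_r$ is a minimizer of $\|\bm{X}\bm{P}-\bm{X}_\star\|_{\mathrm{F}}^2+\|\bm{Y}\bm{P}^{-\top}-\bm{Y}_\star\|_{\mathrm{F}}^2$ over invertible $\bm{P}\in\mathbb{R}^{r\times r}$. Then \[ \big\langle\bm{X}-\bm{X}_\star,(\bm{X}\bm{Y}^\top-\bm{M}_\star)\bm{Y}\big\rangle\ge\|\bm{Y}(\bm{X}-\bm{X}_\star)^\top\|_{\mathrm{F}}^2-\frac14\|\bm{X}-\bm{X}_\star\|_{\mathrm{F}}^4, \] and \[ \big\langle\bm{Y}-\bm{Y}_\star,(\bm{X}\bm{Y}^\top-\bm{M}_\star)^\top\bm{X}\big\rangle\ge\|\bm{X}(\bm{Y}-\bm{Y}_\star)^\top\|_{\mathrm{F}}^2-\frac14\|\bm{Y}-\bm{Y}_\star\|_{\mathrm{F}}^4. \]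
   Context: $\bm{M}_\star\in\mathbb{R}^{n_1\times n_2}$ has rank $r$ and compact SVD $\bm{M}_\star=\bm{U}_\star\bm{\Sigma}_\star\bm{V}_\star^\top$; $\bm{X}_\star=\bm{U}_\star\bm{\Sigma}_\star^{1/2}$, $\bm{Y}_\star=\bm{V}_\star\bm{\Sigma}_\star^{1/2}$, so $\bm{M}_\star=\bm{X}_\star\bm{Y}_\star^\top$. $\langle\bm{A},\bm{B}\rangle=\mathrm{Tr}(\bm{B}^\top\bm{A})$ and $\bm{P}^{-\top}=(\bm{P}^{-1})^\top$. *)

From mathcomp Require Import all_boot all_order all_algebra.
Set Implicit Arguments. Unset Strict Implicit. Unset Printing Implicit Defensive.
Import Order.TTheory GRing.Theory Num.Theory.
Local Open Scope ring_scope.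

Definition frob_inner {R : comNzRingType} {m n : nat} (A B : 'M[R]_(m, n)) : R :=
  \tr (B^T *m A).

Definition frob2 {R : comNzRingType} {m n : nat} (A : 'M[R]_(m, n)) : R :=
  frob_inner A A.

(* Compact SVD data: M = U diag(s) V^T with U, V having orthonormal columns,
   s positive and nonincreasing; Xs = U Sigma^{1/2}, Ys = V Sigma^{1/2}. *)
Definition sqrt_diag {R : rcfType} {r : nat} (s : 'rV[R]_r) : 'M[R]_r :=
  diag_mx (\row_i Num.sqrt (s 0 i)).

Definition compact_svd {R : rcfType} {n1 n2 r : nat} (M : 'M[R]_(n1, n2))
  (U : 'M[R]_(n1, r)) (s : 'rV[R]_r) (V : 'M[R]_(n2, r)) : Prop :=
  [/\ U^T *m U = 1%:M, V^T *m V = 1%:M,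
      (forall i, 0 < s 0 i),
      (forall i j : 'I_r, (i <= j)%N -> s 0 j <= s 0 i)
    & M = U *m diag_mx s *m V^T].

Definition align_obj {R : rcfType} {n1 n2 r : nat}
  (X Xs : 'M[R]_(n1, r)) (Y Ys : 'M[R]_(n2, r)) (P : 'M[R]_r) : R :=
  frob2 (X *m P - Xs) + frob2 (Y *m (invmx P)^T - Ys).

(* Write Dx = X - Xs and Dy = Y - Ys.  Optimality of the identity along the
   curves P = I + tE, E = delta_mx i j, whose inverses I + sE are explicit,
   yields the balance condition K := X^T Dx = Dy^T Y.  The residual splits as
   X Y^T - Xs Ys^T = Dx Y^T + Xs Dy^T, and Xs^T Dx = K - Dx^T Dx, so
     <Dx, (X Y^T - Ms) Y> = |Y Dx^T|^2 + |K|^2 - <K, Dx^T Dx>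
                          >= |Y Dx^T|^2 - |Dx^T Dx|^2 / 4
   by completing the square, and |Dx^T Dx| <= |Dx|^2 by Cauchy-Schwarz.  The
   second inequality is the first one for the transposed problem. *)

From mathcomp Require Import all_boot all_order all_algebra.
From mathcomp Require Import ring lra.
Import Order.TTheory GRing.Theory Num.Theory.
Local Open Scope ring_scope.

Section FrobeniusInner.
Context {R : comNzRingType}.

Lemma frob_innerC {m n} (A B : 'M[R]_(m, n)) : frob_inner A B = frob_inner B A.
Proof. by rewrite /frob_inner -mxtrace_tr trmx_mul trmxK. Qed.

Lemma frob_innerDr {m n} (A B C : 'M[R]_(m, n)) :
  frob_inner A (B + C) = frob_inner A B + frob_inner A C.
Proof. by rewrite /frob_inner linearD /= mulmxDl mxtraceD. Qed.

Lemma frob_innerBr {m n} (A B C : 'M[R]_(m, n)) :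
  frob_inner A (B - C) = frob_inner A B - frob_inner A C.
Proof. by rewrite /frob_inner linearB /= mulmxBl linearB. Qed.

Lemma frob_innerZr {m n} (a : R) (A B : 'M[R]_(m, n)) :
  frob_inner A (a *: B) = a * frob_inner A B.
Proof. by rewrite /frob_inner linearZ /= -scalemxAl mxtraceZ. Qed.

Lemma frob_innerDl {m n} (A B C : 'M[R]_(m, n)) :
  frob_inner (A + B) C = frob_inner A C + frob_inner B C.
Proof. by rewrite frob_innerC frob_innerDr !(frob_innerC C). Qed.

Lemma frob_innerZl {m n} (a : R) (A B : 'M[R]_(m, n)) :
  frob_inner (a *: A) B = a * frob_inner A B.
Proof. by rewrite frob_innerC frob_innerZr frob_innerC. Qed.

Lemma frob_inner_tr {m n} (A B : 'M[R]_(m, n)) :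
  frob_inner A^T B^T = frob_inner A B.
Proof. by rewrite /frob_inner trmxK mxtrace_mulC -/(frob_inner B A) frob_innerC. Qed.

Lemma frob_inner_mulmxl {m n p} (A : 'M[R]_(m, n)) (B : 'M[R]_(n, p)) C :
  frob_inner (A *m B) C = frob_inner B (A^T *m C).
Proof. by rewrite /frob_inner trmx_mul trmxK mulmxA. Qed.

Lemma frob_inner_mulmxr {m n p} (A : 'M[R]_(m, n)) (B : 'M[R]_(n, p)) C :
  frob_inner (A *m B) C = frob_inner A (C *m B^T).
Proof. by rewrite /frob_inner trmx_mul trmxK mulmxA mxtrace_mulC mulmxA. Qed.

Lemma frob_inner_delta {m n} (i : 'I_m) (j : 'I_n) (A : 'M[R]_(m, n)) :
  frob_inner (delta_mx i j) A = A i j.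
Proof.
rewrite /frob_inner /mxtrace (bigD1 j) //= big1 => [|k /negPf kj].
  rewrite addr0 mxE (bigD1 i) //= big1 => [|l /negPf li].
    by rewrite !mxE !eqxx mulr1 addr0.
  by rewrite !mxE li mulr0.
by rewrite mxE big1 // => l _; rewrite !mxE kj andbF mulr0.
Qed.

Lemma frob2D {m n} (A B : 'M[R]_(m, n)) :
  frob2 (A + B) = frob2 A + frob_inner A B *+ 2 + frob2 B.
Proof.
by rewrite /frob2 frob_innerDl !frob_innerDr (frob_innerC B A) mulr2n !addrA.
Qed.

Lemma frob2Z {m n} (a : R) (A : 'M[R]_(m, n)) : frob2 (a *: A) = a ^+ 2 * frob2 A.
Proof. by rewrite /frob2 frob_innerZl frob_innerZr mulrA -expr2. Qed.

End FrobeniusInner.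

Section FrobeniusNorm.
Context {R : realDomainType}.

Lemma frob_innerE {m n} (A B : 'M[R]_(m, n)) :
  frob_inner A B = \sum_i \sum_j A i j * B i j.
Proof.
rewrite /frob_inner /mxtrace exchange_big; apply: eq_bigr => j _.
by rewrite mxE; apply: eq_bigr => i _; rewrite mxE mulrC.
Qed.

Lemma frob2_ge0 {m n} (A : 'M[R]_(m, n)) : 0 <= frob2 A.
Proof.
by rewrite /frob2 frob_innerE; do 2!apply: sumr_ge0 => ? _; rewrite -expr2 sqr_ge0.
Qed.

Lemma frob2_eq0 {m n} (A : 'M[R]_(m, n)) : frob2 A = 0 -> A = 0.
Proof.
have mul_self_ge0 (x : R) : 0 <= x * x by rewrite -expr2 sqr_ge0.
rewrite /frob2 frob_innerE => A0; apply/matrixP => i j; rewrite mxE.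
have Ai0 : \sum_j A i j * A i j = 0.
  by apply: (psumr_eq0P _ A0) => // k _; apply: sumr_ge0.
by apply/eqP; rewrite -[_ == 0]orbb -mulf_eq0 (psumr_eq0P _ Ai0).
Qed.

Lemma frob_inner_sqr_le {m n} (A B : 'M[R]_(m, n)) :
  frob_inner A B ^+ 2 <= frob2 A * frob2 B.
Proof.
have [->|B_neq0] := eqVneq B 0.
  by rewrite /frob2 -(scale0r 0) !frob_innerZr !mul0r expr0n mulr0.
have B_gt0 : 0 < frob2 B.
  by rewrite lt_def frob2_ge0 andbT; apply: contra_neq B_neq0; apply: frob2_eq0.
have := frob2_ge0 (frob2 B *: A + (- frob_inner A B) *: B).
rewrite frob2D !frob2Z frob_innerZl frob_innerZr.
have -> : frob2 B ^+ 2 * frob2 A + frob2 B * (- frob_inner A B * frob_inner A B) *+ 2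
          + (- frob_inner A B) ^+ 2 * frob2 B
          = frob2 B * (frob2 A * frob2 B - frob_inner A B ^+ 2) by ring.
by rewrite pmulr_rge0 // subr_ge0.
Qed.

Lemma frob2_col {m n} (A : 'M[R]_(m, n)) : frob2 A = \sum_j frob2 (col j A).
Proof.
rewrite /frob2 frob_innerE exchange_big; apply: eq_bigr => j _.
by rewrite frob_innerE; apply: eq_bigr => i _; rewrite big_ord1 !mxE.
Qed.

Lemma frob2_gram_le {m n} (A : 'M[R]_(m, n)) : frob2 (A^T *m A) <= frob2 A ^+ 2.
Proof.
rewrite [frob2 A]frob2_col /frob2 frob_innerE expr2 mulr_suml.
apply: ler_sum => i _; rewrite mulr_sumr; apply: ler_sum => j _.
have -> : (A^T *m A) i j = frob_inner (col j A) (col i A).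
  by rewrite /frob_inner /mxtrace big_ord1 !mxE; apply: eq_bigr => k _; rewrite !mxE.
by rewrite -expr2 mulrC frob_inner_sqr_le.
Qed.

End FrobeniusNorm.

Lemma balanced_residual_ge {R : realFieldType} {n1 n2 r}
    (X Xs : 'M[R]_(n1, r)) (Y Ys : 'M[R]_(n2, r)) :
  X^T *m (X - Xs) = (Y - Ys)^T *m Y ->
  frob2 (Y *m (X - Xs)^T) - frob2 (X - Xs) ^+ 2 / 4
    <= frob_inner (X - Xs) ((X *m Y^T - Xs *m Ys^T) *m Y).
Proof.
set Dx := X - Xs; set Dy := Y - Ys; set K := X^T *m Dx; set D := Dx^T *m Dx.
move=> balanced.
have residualE : X *m Y^T - Xs *m Ys^T = Dx *m Y^T + Xs *m Dy^T.
  by rewrite /Dx /Dy mulmxBl linearB /= mulmxBr addrA subrK.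
have XsDx : Xs^T *m Dx = K - D by rewrite -mulmxBl -linearB /= subKr.
have cross : frob_inner Dx (Dx *m Y^T *m Y) = frob2 (Y *m Dx^T).
  by rewrite frob_innerC frob_inner_mulmxr -frob_inner_tr trmx_mul trmxK.
have coupling : frob_inner Dx (Xs *m Dy^T *m Y) = frob2 K - frob_inner K D.
  by rewrite frob_innerC -mulmxA frob_inner_mulmxl XsDx -balanced frob_innerBr.
rewrite residualE mulmxDl frob_innerDr cross coupling.
have := frob2_ge0 (K + (- 2^-1) *: D); rewrite frob2D frob2Z frob_innerZr mulr2n.
have := frob2_gram_le Dx; rewrite -/D.
lra.
Qed.

Section FirstOrder.
Context {R : realFieldType}.

Lemma linear_term_eq0 (x : R) (q : {poly R}) :
  (forall t, 0 <= t * x + t ^+ 2 * q.[t]) -> x = 0.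
Proof.
move=> ge0; have [ub ubP] := poly_disk_bound q 1.
(* At t = -x/c, with c above |x| and the bound of q on [-1, 1], the linear term wins. *)
set c := `|x| + `|ub| + 1; set t := - x / c.
have c_gt0 : 0 < c by rewrite /c; have := normr_ge0 x; have := normr_ge0 ub; lra.
have t_le1 : `|t| <= 1.
  rewrite normrM normrN normfV (gtr0_norm c_gt0) ler_pdivrMr // mul1r.
  by rewrite /c; have := normr_ge0 ub; lra.
have qt_le : q.[t] <= `|ub|.
  exact: le_trans (ler_norm _) (le_trans (ubP _ t_le1) (ler_norm _)).
have := ge0 t.
have -> : t * x + t ^+ 2 * q.[t] = (x / c) ^+ 2 * (q.[t] - c).
  by rewrite /t; field; rewrite gt_eqF.
have w_lt0 : q.[t] - c < 0 by rewrite /c; have := normr_ge0 x; lra.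
rewrite (nmulr_lge0 _ w_lt0) => y2_le0.
have : (x / c) ^+ 2 == 0 by rewrite eq_le sqr_ge0 y2_le0.
by rewrite sqrf_eq0 mulf_eq0 invr_eq0 (gt_eqF c_gt0) orbF => /eqP.
Qed.

Lemma inverse_pair_stationary (a b c d e : R) : 0 <= d ->
  (forall t s, s * (1 + e * t) = - t ->
     0 <= 2 * t * a + t ^+ 2 * b + 2 * s * c + s ^+ 2 * d) ->
  a = c.
Proof.
move=> d_ge0 ge0.
(* Multiplying the hypothesis by (1 + e t)^2 clears s and gives
   0 <= t * 2 (a - c) + t^2 q(t). *)
pose q : {poly R} := (b + d + 2 * e * (2 * a - c))%:P
  + (2 * e * (b + e * a))%:P * 'X + (e ^+ 2 * b)%:P * 'X^2.
suff : 2 * (a - c) = 0 by lra.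
apply: (@linear_term_eq0 _ q) => t.
have -> : q.[t] = b + d + 2 * e * (2 * a - c) + 2 * e * (b + e * a) * t
                  + e ^+ 2 * b * t ^+ 2 by rewrite !hornerE.
rewrite [X in 0 <= X](_ : _ = (1 + e * t) ^+ 2 * (2 * t * a + t ^+ 2 * b)
                           + 2 * c * (1 + e * t) * (- t) + (- t) ^+ 2 * d); last by ring.
have [et0|et_neq0] := eqVneq (1 + e * t) 0.
  by rewrite et0 expr0n /= !(mul0r, mulr0, add0r) mulr_ge0 ?sqr_ge0.
set s := - t / (1 + e * t).
have hs : s * (1 + e * t) = - t by rewrite divfK.
rewrite -{1 2}hs.
have -> : (1 + e * t) ^+ 2 * (2 * t * a + t ^+ 2 * b)
          + 2 * c * (1 + e * t) * (s * (1 + e * t)) + (s * (1 + e * t)) ^+ 2 * d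
          = (1 + e * t) ^+ 2 * (2 * t * a + t ^+ 2 * b + 2 * s * c + s ^+ 2 * d) by ring.
by rewrite mulr_ge0 ?sqr_ge0 ?ge0.
Qed.

End FirstOrder.

Section AlignmentStationarity.
Context {R : rcfType} {n1 n2 r : nat}.
Context {X Xs : 'M[R]_(n1, r)} {Y Ys : 'M[R]_(n2, r)}.
Hypothesis align_min : forall P : 'M[R]_r, P \in unitmx ->
  align_obj X Xs Y Ys 1%:M <= align_obj X Xs Y Ys P.

Lemma align_obj_inverse_pair (E : 'M[R]_r) (t s : R) :
  (1%:M + t *: E) *m (1%:M + s *: E) = 1%:M ->
  0 <= 2 * t * frob_inner (X *m E) (X - Xs) + t ^+ 2 * frob2 (X *m E)
     + 2 * s * frob_inner (Y *m E^T) (Y - Ys) + s ^+ 2 * frob2 (Y *m E^T).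
Proof.
set P := 1%:M + t *: E; set Q := 1%:M + s *: E => PQ1.
have [P_unit _] := mulmx1_unit PQ1.
have invP : invmx P = Q by rewrite -[LHS]mulmx1 -PQ1 mulmxA mulVmx // mul1mx.
have := align_min _ P_unit.
rewrite /align_obj invmx1 invP /P /Q [(_ + _)^T]linearD linearZ /= !trmx1.
rewrite !mulmx1 !mulmxDr !mulmx1.
rewrite -!scalemxAr [X + _ - _]addrAC [Y + _ - _]addrAC !frob2D !frob2Z !frob_innerZr.
rewrite (frob_innerC (X - Xs)) (frob_innerC (Y - Ys)) !mulr2n.
lra.
Qed.

Lemma align_obj_stationary (E : 'M[R]_r) (e : R) : E *m E = e *: E ->
  frob_inner (X *m E) (X - Xs) = frob_inner (Y *m E^T) (Y - Ys).
Proof.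
move=> EE.
apply: (inverse_pair_stationary _ (frob2 (X *m E)) _ _ e (frob2_ge0 (Y *m E^T))).
move=> t s hs; apply: align_obj_inverse_pair.
rewrite mulmxDl !mulmxDr !mul1mx mulmx1 -scalemxAl -scalemxAr EE !scalerA.
rewrite -addrA -!scalerDl.
have -> : s + (t + t * s * e) = s * (1 + e * t) + t by ring.
by rewrite hs addNr scale0r addr0.
Qed.

Lemma align_obj_balanced : X^T *m (X - Xs) = (Y - Ys)^T *m Y.
Proof.
apply/matrixP => i j.
have EE : delta_mx i j *m delta_mx i j = (i == j)%:R *: delta_mx i j :> 'M[R]_r.
  by rewrite mul_delta_mx_cond scaler_nat eq_sym.
have := align_obj_stationary _ _ EE.
rewrite !frob_inner_mulmxl trmx_delta !frob_inner_delta => ->.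
by rewrite -[(Y - Ys)^T *m Y]trmxK trmx_mul trmxK [RHS]mxE.
Qed.

End AlignmentStationarity.

Lemma sqrt_diag_mul_tr {R : rcfType} {r} (s : 'rV[R]_r) :
  (forall i, 0 <= s 0 i) -> sqrt_diag s *m (sqrt_diag s)^T = diag_mx s.
Proof.
move=> s_ge0; rewrite /sqrt_diag tr_diag_mx mulmx_diag; congr diag_mx.
by apply/rowP => i; rewrite !mxE -expr2 sqr_sqrtr.
Qed.

Lemma compact_svd_factor {R : rcfType} {n1 n2 r} {M : 'M[R]_(n1, n2)}
  {U : 'M[R]_(n1, r)} {s : 'rV[R]_r} {V : 'M[R]_(n2, r)} :
  compact_svd M U s V -> M = (U *m sqrt_diag s) *m (V *m sqrt_diag s)^T.
Proof.
case=> _ _ s_gt0 _ ->; rewrite trmx_mul mulmxA -[in RHS](mulmxA U) sqrt_diag_mul_tr //.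
by move=> i; apply: ltW.
Qed.

Theorem lemma3 (R : rcfType) (n1 n2 r : nat)
  (Ms : 'M[R]_(n1, n2)) (U : 'M[R]_(n1, r)) (s : 'rV[R]_r) (V : 'M[R]_(n2, r))
  (X : 'M[R]_(n1, r)) (Y : 'M[R]_(n2, r)) :
  compact_svd Ms U s V ->
  let Xs := U *m sqrt_diag s in
  let Ys := V *m sqrt_diag s in
  (forall P : 'M[R]_r, P \in unitmx ->
     align_obj X Xs Y Ys 1%:M <= align_obj X Xs Y Ys P) ->
  frob2 (Y *m (X - Xs)^T) - (frob2 (X - Xs)) ^+ 2 / 4
    <= frob_inner (X - Xs) ((X *m Y^T - Ms) *m Y)
  /\
  frob2 (X *m (Y - Ys)^T) - (frob2 (Y - Ys)) ^+ 2 / 4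
    <= frob_inner (Y - Ys) ((X *m Y^T - Ms)^T *m X).
Proof.
move=> svd Xs Ys align_min.
have Ms_factor : Ms = Xs *m Ys^T := compact_svd_factor svd.
have balanced := align_obj_balanced align_min.
have balancedT : Y^T *m (Y - Ys) = (X - Xs)^T *m X.
  by rewrite -[LHS]trmxK trmx_mul trmxK -balanced trmx_mul trmxK.
have residualT : (X *m Y^T - Ms)^T = Y *m X^T - Ys *m Xs^T.
  by rewrite Ms_factor linearB /= !trmx_mul !trmxK.
split; first by rewrite Ms_factor; apply: balanced_residual_ge.
by rewrite residualT; apply: balanced_residual_ge.
Qed.
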